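(* Consider the following two-bidder auction. A single good has common value $v$ with CDF $F_v$, density $f_v$, support $\mathbb{R}_+$ and finite mean. Assume $\mathbb{E}[v]>L\ge 0$ and let $\underline v$ in the support of $F_v$ satisfy $L=\mathbb{E}[\tilde v\mid\tilde v<\underline v]$ ($\tilde v\sim F_v$). Alice submits a bid knowing only $F_v$; then $v$ is realized and Bob, observing $v$ but not Alice's bid, submits a bid. The highest bid wins and pays its bid (payoff $v$ minus bid) unless it is strictly below $L$, in which case the good is unsold. If the bids tie, Bob wins; if Bob's bid equals $L$ he can win; a winning bid of Alice equal exactly to $L$ results in no sale. Define $$\beta_L(v)=\begin{cases}\mathbb{E}[\tilde v\mid \tilde v<v] & v\ge \underline v,\\ L & L<v<\underline v,\\ 0 & v\le L.\end{cases}$$ Suppose Alice draws $v'\sim F_v$ independently of $v$ and bids $\beta_L(v')$. Then Bob's best response, upon observing $v$, is to bid $\beta_L(v)$.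
   Context: Bidders are risk neutral. *)

From mathcomp Require Import all_boot all_order all_algebra.
From mathcomp Require Import all_classical all_reals all_analysis.
Set Implicit Arguments. Unset Strict Implicit. Unset Printing Implicit Defensive.
Import Order.TTheory GRing.Theory Num.Theory.
Local Open Scope classical_set_scope.
Local Open Scope ring_scope.

Section AuctionDefs.
Context {R : realType}.
Local Notation mu := (@lebesgue_measure R).

Definition prob (f : R -> R) (A : set R) : \bar R :=
  (\int[mu]_(x in A) (f x)%:E)%E.

Definition density_support_Rplus (f : R -> R) : Prop :=
  [/\ measurable_fun setT f,
      (forall x, 0 <= f x),
      prob f setT = 1%E,
      prob f `]-oo, 0[ = 0%E &
      (forall a b, a < b -> 0 < b -> (0 < prob f `]a, b[)%E)].

Definition finite_mean (f : R -> R) : Prop :=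
  mu.-integrable setT (fun x => (x * f x)%:E).

Definition mean (f : R -> R) : \bar R := (\int[mu]_x (x * f x)%:E)%E.

(* E[v~ | v~ < v] for v~ ~ f  (convention: 0 when P(v~ < v) = 0, i.e. the
   limit value at v = 0) *)
Definition condmean (f : R -> R) (v : R) : R :=
  fine (\int[mu]_(x in `]-oo, v[) (x * f x)%:E)%E / fine (prob f `]-oo, v[).

(* The bidding strategy beta_L, with vl the underline-v of the paper. *)
Definition beta (f : R -> R) (L vl v : R) : R :=
  if v <= L then 0 else if v < vl then L else condmean f v.

Definition bob_payoff (L v a b : R) : R :=
  if (L <= b) && (a <= b) then v - b else 0.

Definition bob_util (f : R -> R) (L vl v b : R) : \bar R :=
  (\int[mu]_t (f t * bob_payoff L v (beta f L vl t) b)%:E)%E.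

End AuctionDefs.

(* Write F(t) = P(v' < t) and H(t) = E[v'; v' < t], so that beta_L = H/F on
   (max(L, vl), +oo).  As beta_L is nondecreasing, a bid b >= L beats exactly
   the types of Alice in the down-set {t | beta_L(t) <= b}, and Bob earns
   (v - b) times its mass.  For t >= vl in that set H(t)/F(t) <= b, hence
   (v - b) F(t) <= S_v(t) := v F(t) - H(t) = E[v - v'; v' < t],
   and on [vl, +oo) the surplus S_v is maximal at w = max(v, vl), because its
   increments are integrals of (v - x) f(x).  The bid beta_L(v) = H(w)/F(w)
   beats every type below w and so earns at least S_v(w), which bounds every
   other bid. *)

From mathcomp Require Import all_boot all_order all_algebra.
From mathcomp Require Import all_classical all_reals all_analysis.
From mathcomp Require Import measurable_realfun lra.
Import Order.TTheory GRing.Theory Num.Theory.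
Local Open Scope classical_set_scope.
Local Open Scope ring_scope.
Set Implicit Arguments. Unset Strict Implicit. Unset Printing Implicit Defensive.

Section RealIntegrals.
Context {R : realType}.
Local Notation mu := (@lebesgue_measure R).

Lemma set_itvNyo_setU (t t' : R) :
  t <= t' -> `]-oo, t'[%classic = `]-oo, t[ `|` `[t, t'[ :> set R.
Proof. by move=> tt'; apply: itv_bndbnd_setU; rewrite bnd_simp. Qed.

Lemma Rintegral_itvNyoB (g : R -> R) (t t' : R) :
  t <= t' -> mu.-integrable setT (EFin \o g) ->
  \int[mu]_(x in `]-oo, t'[) g x - \int[mu]_(x in `]-oo, t[) g x =
  \int[mu]_(x in `[t, t'[) g x.
Proof.
move=> tt' ig; rewrite (set_itvNyo_setU tt') Rintegral_setU //.
- by rewrite addrAC subrr add0r.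
- by rewrite -(set_itvNyo_setU tt'); exact: integrableS ig.
- apply/disj_setPS => x [/=]; rewrite !in_itv /= => xt /andP[tx _].
  by move: (lt_le_trans xt tx); rewrite ltxx.
Qed.

Lemma Rintegral_mul_null D (f g : R -> R) :
  measurable D -> (forall x, 0 <= f x) -> mu.-integrable D (EFin \o f) ->
  mu.-integrable D (EFin \o (fun x => g x * f x)) ->
  \int[mu]_(x in D) f x = 0 -> \int[mu]_(x in D) (g x * f x) = 0.
Proof.
move=> mD f_ge0 f_int gf_int f_null.
have abs_f_null : (\int[mu]_(x in D) `|(f x)%:E| = 0)%E.
  under eq_integral do rewrite gee0_abs ?lee_fin//.
  have f_fin := integrable_fin_num mD f_int.
  by rewrite -[LHS]fineK //; move: f_null; rewrite /Rintegral => ->.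
have /(ae_eq_integral_abs mu mD (measurable_int mu f_int)) f_ae0 := abs_f_null.
rewrite /Rintegral (@ae_eq_integral _ _ _ mu _ (cst 0%E)) ?integral0//.
- exact: measurable_int gf_int.
- by apply: filterS f_ae0 => x /= fx0 Dx; rewrite EFinM fx0 ?mule0.
Qed.

Lemma density_integrable (f : R -> R) : measurable_fun setT f ->
  (forall x, 0 <= f x) -> prob f setT = 1%E ->
  (@lebesgue_measure R).-integrable setT (EFin \o f).
Proof.
move=> mf f_ge0 f_prob1; apply/integrableP; split; first exact/measurable_EFinP.
under eq_integral do rewrite /= ger0_norm//.
by move: f_prob1; rewrite /prob => ->; rewrite ltry.
Qed.

End RealIntegrals.

Section Density.
Context {R : realType} (f : R -> R).
Local Notation mu := (@lebesgue_measure R).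
Hypotheses (f_ge0 : forall x, 0 <= f x) (f_int : mu.-integrable setT (EFin \o f)).
Hypothesis xf_int : finite_mean f.
Hypothesis f_null_neg : prob f `]-oo, 0[ = 0%E.
Hypothesis f_pos : forall a b, a < b -> 0 < b -> (0 < prob f `]a, b[)%E.

Let f_intS D : measurable D -> mu.-integrable D (EFin \o f).
Proof. by move=> mD; apply: integrableS f_int. Qed.

Let xf_intS D : measurable D -> mu.-integrable D (EFin \o (fun x => x * f x)).
Proof. by move=> mD; apply: integrableS xf_int. Qed.

Let f_fin D : measurable D -> (\int[mu]_(x in D) (f x)%:E)%E \is a fin_num.
Proof. by move=> mD; have := f_intS mD; apply: integrable_fin_num. Qed.

Definition cdf t := \int[mu]_(x in `]-oo, t[) f x.

Definition partial_mean t := \int[mu]_(x in `]-oo, t[) (x * f x).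

Lemma condmeanE t : condmean f t = partial_mean t / cdf t.
Proof. by []. Qed.

Lemma le_Rintegral_subset A B : measurable A -> measurable B -> A `<=` B ->
  \int[mu]_(x in A) f x <= \int[mu]_(x in B) f x.
Proof.
move=> mA mB AB; apply: fine_le; rewrite ?f_fin//.
apply: ge0_subset_integral => //=; last by move=> x _; rewrite lee_fin.
exact: measurable_int (f_intS mB).
Qed.

Lemma cdf_ge0 t : 0 <= cdf t.
Proof. exact: Rintegral_ge0. Qed.

Lemma le_cdf : {homo cdf : s t / s <= t}.
Proof.
move=> s t st; rewrite -subr_ge0 /cdf Rintegral_itvNyoB//.
exact: Rintegral_ge0.
Qed.

Lemma cdf_gt0 t : 0 < t -> 0 < cdf t.
Proof.
move=> t0; apply: (@lt_le_trans _ _ (\int[mu]_(x in `]-1, t[) f x)).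
  rewrite /Rintegral fine_gt0// f_pos ?ltey_eq ?f_fin//.
  by rewrite (lt_trans _ t0)// ltrN10.
by apply: le_Rintegral_subset => // x /=; rewrite !in_itv /= => /andP[].
Qed.

Lemma cdf_le0 t : t <= 0 -> cdf t = 0.
Proof.
move=> t0; apply/eqP; rewrite eq_le cdf_ge0 andbT.
apply: (@le_trans _ _ (\int[mu]_(x in `]-oo, 0[) f x)).
  by apply: le_Rintegral_subset => // x /=; rewrite !in_itv /= => /lt_le_trans; apply.
by rewrite /Rintegral; move: f_null_neg; rewrite /prob => ->.
Qed.

Lemma partial_mean_le0 t : t <= 0 -> partial_mean t = 0.
Proof.
by move=> t0; apply: Rintegral_mul_null => //; [exact: f_intS|exact: xf_intS|exact: cdf_le0].
Qed.

Lemma partial_mean_ge0 t : 0 <= partial_mean t.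
Proof.
have [t0|t0] := leP t 0; first by rewrite partial_mean_le0.
rewrite -(partial_mean_le0 (lexx 0)) -subr_ge0 /partial_mean (Rintegral_itvNyoB (ltW t0))//.
by apply: Rintegral_ge0 => x; rewrite /= in_itv /= => /andP[x0 _]; exact: mulr_ge0.
Qed.

Lemma partial_mean_le t : partial_mean t <= t * cdf t.
Proof.
rewrite /partial_mean /cdf -RintegralZl ?f_intS//.
apply: le_Rintegral => //; [exact: xf_intS|exact: integrableZl (f_intS _)|].
by move=> x; rewrite /= in_itv /= => /ltW xt; exact: ler_wpM2r.
Qed.

Lemma partial_meanB_le s t c : s <= t -> (forall x, s <= x < t -> x <= c) ->
  partial_mean t - partial_mean s <= c * (cdf t - cdf s).
Proof.
move=> st xc; rewrite /partial_mean /cdf !Rintegral_itvNyoB// -RintegralZl ?f_intS//.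
apply: le_Rintegral => //; [exact: xf_intS|exact: integrableZl (f_intS _)|].
by move=> x; rewrite /= in_itv /= => /xc; exact: ler_wpM2r.
Qed.

Lemma partial_meanB_ge s t c : s <= t -> (forall x, s <= x < t -> c <= x) ->
  c * (cdf t - cdf s) <= partial_mean t - partial_mean s.
Proof.
move=> st cx; rewrite /partial_mean /cdf !Rintegral_itvNyoB// -RintegralZl ?f_intS//.
apply: le_Rintegral => //; [exact: integrableZl (f_intS _)|exact: xf_intS|].
by move=> x; rewrite /= in_itv /= => /cx; exact: ler_wpM2r.
Qed.

Lemma partial_meanE t : partial_mean t = condmean f t * cdf t.
Proof.
have [t0|t0] := leP t 0; first by rewrite partial_mean_le0 // cdf_le0 // mulr0.
by rewrite condmeanE divfK // gt_eqF // cdf_gt0.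
Qed.

Lemma condmean_ge0 t : 0 <= condmean f t.
Proof. by rewrite condmeanE divr_ge0 ?partial_mean_ge0 ?cdf_ge0. Qed.

Lemma condmean_le t : 0 <= t -> condmean f t <= t.
Proof.
rewrite le_eqVlt => /predU1P[<-|t0]; first by rewrite condmeanE cdf_le0 ?invr0 ?mulr0.
by rewrite condmeanE ler_pdivrMr ?cdf_gt0 ?partial_mean_le.
Qed.

Lemma le_condmean : {homo condmean f : s t / s <= t}.
Proof.
move=> s t st; have [s0|s0] := leP s 0.
  by rewrite condmeanE cdf_le0 // invr0 mulr0 condmean_ge0.
have Fs := cdf_gt0 s0; have Ft := cdf_gt0 (lt_le_trans s0 st).
have Fst := le_cdf st; have Hs := partial_mean_le s.
have Hst := partial_meanB_ge (c := s) st (fun x sxt => proj1 (andP sxt)).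
rewrite !condmeanE ler_pdivrMr // mulrAC ler_pdivlMr //.
nra.
Qed.

Definition surplus v t := v * cdf t - partial_mean t.

Lemma surplusE v t : surplus v t = (v - condmean f t) * cdf t.
Proof. by rewrite /surplus partial_meanE mulrBl. Qed.

Lemma le_surplus_below v s t : s <= t -> t <= v -> surplus v s <= surplus v t.
Proof.
move=> st tv; have := partial_meanB_le (c := v) st.
have /[swap]/[apply] : forall x, s <= x < t -> x <= v.
  by move=> x /andP[_ /ltW/le_trans]; apply.
rewrite /surplus; lra.
Qed.

Lemma ge_surplus_above v s t : v <= s -> s <= t -> surplus v t <= surplus v s.
Proof.
move=> vs st; have := partial_meanB_ge (c := v) st.
have /[swap]/[apply] : forall x, s <= x < t -> v <= x.
  by move=> x /andP[/(le_trans vs)].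
rewrite /surplus; lra.
Qed.

Lemma surplus_le_self v t : surplus v t <= surplus v v.
Proof.
have [tv|vt] := leP t v; first exact: le_surplus_below.
exact: ge_surplus_above (ltW vt).
Qed.

Lemma Rintegral_le_cdf_bigcup (A : set R) (s : R) (u : nat -> R) K :
  measurable A -> {homo u : n k / (n <= k)%N >-> n <= k} ->
  A `\ s `<=` \bigcup_n `]-oo, u n[%classic -> (forall n, cdf (u n) <= K) ->
  \int[mu]_(x in A) f x <= K.
Proof.
move=> mA u_nd Asub uK.
have mf (D : set R) : measurable D -> measurable_fun D (EFin \o f).
  by move=> mD; apply: measurable_funS (measurable_int _ f_int).
have cvg_u : (\int[mu]_(x in `]-oo, u n[) (f x)%:E)%E @[n --> \oo] -->
    (\int[mu]_(x in \bigcup_n `]-oo, u n[%classic) (f x)%:E)%E.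
  apply: ge0_nondecreasing_set_cvg_integral => //.
  - move=> n k nk; apply/subsetPset => x /=; rewrite !in_itv /= => /lt_le_trans.
    by apply; exact: u_nd.
  - by move=> n; exact: mf.
  - by move=> n x _; rewrite lee_fin.
have mAs : measurable (A `\ s) by exact: measurableD.
rewrite -lee_fin /Rintegral fineK ?f_fin// -(integral_setD1 (r := s)) //; last exact: mf.
apply: (@le_trans _ _ (\int[mu]_(x in \bigcup_n `]-oo, u n[%classic) (f x)%:E)%E).
  apply: ge0_subset_integral => //; first exact: bigcup_measurable.
    by apply: mf; exact: bigcup_measurable.
  by move=> x _; rewrite lee_fin.
rewrite -(cvg_lim _ cvg_u)//; apply: lime_le; first exact: cvgP cvg_u.
by apply: nearW => n; have := uK n; rewrite -lee_fin /cdf /Rintegral fineK ?f_fin.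
Qed.

Lemma Rintegral_le_cdf_downclosed (A : set R) K : measurable A -> A !=set0 ->
  (forall s t, s <= t -> A t -> A s) -> (forall t, A t -> cdf t <= K) ->
  \int[mu]_(x in A) f x <= K.
Proof.
move=> mA A0 A_down AK.
have [A_ub|A_unb] := pselect (has_ubound A).
  have A_sup : has_sup A by [].
  pose u n := sup A - n.+1%:R^-1.
  apply: (Rintegral_le_cdf_bigcup (s := sup A) (u := u)) => //.
  - by move=> n k nk; rewrite lerD2l lerN2 lef_pV2 ?posrE ?ler_nat.
  - move=> x [Ax /= xs].
    have xs' : x < sup A by rewrite lt_neqAle sup_upper_bound // andbT; apply/eqP.
    exists (Num.truncn ((sup A - x)^-1)) => //=; rewrite in_itv /=.
    by rewrite ltrBrDl -ltrBrDr invf_plt ?posrE ?subr_gt0 // truncnS_gt.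
  - move=> n; apply: AK; have n_gt0 : 0 < n.+1%:R^-1 :> R by rewrite invr_gt0.
    by have [e Ae /ltW ue] := sup_adherent n_gt0 A_sup; exact: A_down ue Ae.
have A_geq M : exists2 t, A t & M <= t.
  apply: contrapT => /forall2NP A_lt; apply: A_unb; exists M => y Ay.
  by case: (A_lt y) => // /negP; rewrite -ltNge => /ltW.
apply: (Rintegral_le_cdf_bigcup (s := 0) (u := fun n => n%:R)) => //.
- by move=> n k nk; rewrite ler_nat.
- by move=> x _; exists (Num.truncn x).+1 => //=; rewrite in_itv /= truncnS_gt.
- by move=> n; apply: AK; have [t At nt] := A_geq n%:R; exact: A_down nt At.
Qed.

Section CommonValueAuction.
Variables (L vl : R).
Hypotheses (L_ge0 : 0 <= L) (vl_ge0 : 0 <= vl) (L_condmean : L = condmean f vl).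
Local Notation bid := (beta f L vl).
Local Notation util := (bob_util f L vl).

Lemma beta_ge0 t : 0 <= bid t.
Proof. by rewrite /beta; case: ifP => // _; case: ifP => // _; exact: condmean_ge0. Qed.

Lemma le_beta : {homo bid : s t / s <= t}.
Proof.
move=> s t st; have [sL|Ls] := leP s L; first by rewrite {1}/beta sL beta_ge0.
have sL_F : (s <= L) = false by rewrite leNgt Ls.
have tL_F : (t <= L) = false by rewrite leNgt (lt_le_trans Ls st).
rewrite /beta sL_F tL_F.
case: (ltP s vl) => svl; case: (ltP t vl) => tvl /=.
- by [].
- by rewrite L_condmean; exact: le_condmean.
- by have := le_lt_trans (le_trans svl st) tvl; rewrite ltxx.
- exact: le_condmean.
Qed.

Lemma beta_gtL v : L < v -> bid v = condmean f (Num.max v vl).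
Proof.
move=> Lv; rewrite /beta ifF ?leNgt ?Lv// maxElt.
by case: ifP => _; rewrite ?L_condmean.
Qed.

Definition bob_wins b := [set t | bid t <= b].

Lemma measurable_bob_wins b : measurable (bob_wins b).
Proof.
have := nondecreasing_measurable measurableT le_beta measurableT
  (measurable_itv `]-oo, b]).
by rewrite setTI; congr measurable; apply/seteqP; split => x /=; rewrite in_itv.
Qed.

Lemma bob_util_ltL v b : b < L -> util v b = 0%E.
Proof.
move=> bL; rewrite /bob_util integral0_eq // => x _.
by rewrite /bob_payoff ifF ?mulr0 // leNgt bL.
Qed.

Lemma bob_utilE v b : L <= b ->
  util v b = ((v - b) * \int[mu]_(x in bob_wins b) f x)%:E.
Proof.
move=> Lb; rewrite /bob_util.
transitivity (\int[mu]_x (((fun x => (v - b)%:E * (f x)%:E) \_ (bob_wins b)) x))%E.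
  apply: eq_integral => x _; rewrite patchE /bob_payoff Lb /=.
  have -> : (x \in bob_wins b) = (bid x <= b) by apply/idP/idP; rewrite inE.
  by case: ifP => _; rewrite ?mulr0 // EFinM muleC.
have win_b := measurable_bob_wins b.
rewrite -integral_mkcond integralZl //; last exact: f_intS.
by rewrite EFinM /Rintegral fineK // f_fin.
Qed.

Lemma beta_le v : 0 <= v -> bid v <= v.
Proof.
move=> v0; rewrite /beta; case: (leP v L) => // Lv.
by case: ifP => _; [exact: ltW|exact: condmean_le].
Qed.

Lemma beta_pooling v : L < v < vl -> bid v = L.
Proof. by case/andP=> Lv vvl; rewrite /beta ifF ?vvl// leNgt Lv. Qed.

Lemma beta_vl_leL : bid vl <= L.
Proof. by rewrite /beta; case: ifP => // _; rewrite ltxx -L_condmean. Qed.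

Lemma condmean_le_of_beta t b : L <= b -> vl <= t -> bid t <= b -> condmean f t <= b.
Proof.
move=> Lb vlt; rewrite /beta; case: (leP t L) => [tL _|Lt].
  by rewrite (le_trans (condmean_le (le_trans vl_ge0 vlt))) // (le_trans tL).
by rewrite ltNge vlt.
Qed.

Lemma surplus_le_max v t : vl <= t -> surplus v t <= surplus v (Num.max v vl).
Proof.
move=> vlt; rewrite maxElt; case: ltP => [vvl|vlv]; last exact: surplus_le_self.
exact: ge_surplus_above (ltW vvl) vlt.
Qed.

Lemma surplus_max_ge0 v : L < v -> 0 <= surplus v (Num.max v vl).
Proof.
move=> Lv; rewrite surplusE -beta_gtL// mulr_ge0 ?cdf_ge0// subr_ge0.
by rewrite beta_le// (le_trans L_ge0) ?ltW.
Qed.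

Lemma bob_util_beta_ge v : L < v ->
  ((surplus v (Num.max v vl))%:E <= util v (bid v))%E.
Proof.
move=> Lv; have v_ge0 := le_trans L_ge0 (ltW Lv).
have L_bid : L <= bid v by rewrite beta_gtL// L_condmean le_condmean// le_max lexx orbT.
rewrite bob_utilE// surplusE -beta_gtL// lee_fin ler_wpM2l ?subr_ge0 ?beta_le//.
apply: le_Rintegral_subset => //; first exact: measurable_bob_wins.
move=> t /=; rewrite in_itv /= => t_max; rewrite /bob_wins /=.
have [tv|vt] := ltP t v; first exact/le_beta/ltW.
have tvl : t < vl by move: t_max; rewrite lt_max ltNge vt.
by rewrite !beta_pooling ?Lv ?tvl ?(lt_le_trans Lv vt) ?(le_lt_trans vt tvl).
Qed.

Lemma bob_util_le_surplus v b : L < v ->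
  (util v b <= (surplus v (Num.max v vl))%:E)%E.
Proof.
move=> Lv; have S_ge0 := surplus_max_ge0 Lv.
have [bL|Lb] := ltP b L; first by rewrite bob_util_ltL.
rewrite bob_utilE// lee_fin.
have [vb|bv] := leP v b.
  by apply: le_trans S_ge0; rewrite mulr_le0_ge0 ?subr_le0 ?Rintegral_ge0.
have vb_gt0 : 0 < v - b by rewrite subr_gt0.
have cdf_bound t :
    vl <= t -> bid t <= b -> (v - b) * cdf t <= surplus v (Num.max v vl).
  move=> vlt tb; apply: le_trans (surplus_le_max v vlt).
  rewrite surplusE ler_wpM2r ?cdf_ge0// lerD2l lerN2.
  exact: condmean_le_of_beta.
rewrite mulrC -ler_pdivlMr//; apply: Rintegral_le_cdf_downclosed.
- exact: measurable_bob_wins.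
- by exists vl; rewrite /bob_wins /= (le_trans beta_vl_leL).
- by move=> s t st; apply: le_trans; exact: le_beta.
- move=> t tb; rewrite ler_pdivlMr// mulrC.
  have [tvl|vlt] := ltP t vl; last exact: cdf_bound.
  apply: le_trans (cdf_bound _ (lexx _) (le_trans beta_vl_leL Lb)).
  by apply: ler_wpM2l; [exact: ltW|apply: le_cdf; exact: ltW].
Qed.

Lemma bob_util_le0 v b : v <= L -> (util v b <= 0)%E.
Proof.
move=> vL; have [bL|Lb] := ltP b L; first by rewrite bob_util_ltL.
rewrite bob_utilE// lee_fin mulr_le0_ge0 ?Rintegral_ge0// subr_le0.
exact: le_trans Lb.
Qed.

Lemma bob_util_beta_eq0 v : 0 <= v -> v <= L -> util v (bid v) = 0%E.
Proof.
move=> v0 vL; have -> : bid v = 0 by rewrite /beta vL.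
have [L_gt0|L_le0] := ltP 0 L; first exact: bob_util_ltL.
have L0 : L = 0 by apply/le_anti; rewrite L_le0 L_ge0.
have v00 : v = 0 by apply/le_anti; rewrite v0 -L0 vL.
by rewrite bob_utilE ?L0// v00 subrr mul0r.
Qed.

Lemma beta_best_response v b : 0 <= v -> (util v b <= util v (bid v))%E.
Proof.
move=> v_ge0; have [vL|Lv] := leP v L.
  by rewrite bob_util_beta_eq0 ?bob_util_le0.
exact: le_trans (bob_util_le_surplus b Lv) (bob_util_beta_ge Lv).
Qed.

End CommonValueAuction.

End Density.

Theorem lemma4 (R : realType) (f : R -> R) (L vl : R) :
  density_support_Rplus f ->
  finite_mean f ->
  0 <= L ->
  (L%:E < mean f)%E ->
  0 <= vl ->
  L = condmean f vl ->
  forall v : R, 0 <= v ->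
  forall b : R, (bob_util f L vl v b <= bob_util f L vl v (beta f L vl v))%E.
Proof.
(* [L < E v] only serves to guarantee that some [vl] exists; here [vl] is given. *)
move=> [mf f_ge0 f_prob1 f_null_neg f_pos] xf_int L_ge0 _ vl_ge0 L_condmean v v_ge0 b.
have f_int := density_integrable mf f_ge0 f_prob1.
by have := beta_best_response f_ge0 f_int xf_int f_null_neg f_pos
  L_ge0 vl_ge0 L_condmean b v_ge0.
Qed.
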